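(* Let $T$ be a (finite) tree with an even number of vertices. Then there exists a labeling $f:E(T)\to\{-1,+1\}$ such that $|e_f(-1)-e_f(1)|=1$, $|f(v)|\le 1$ for every vertex $v$ of $T$, and $|v_f(-1)-v_f(1)|=2$.
   Context: Given a labeling $f:E(T)\to\{-1,+1\}$, for each vertex $v$ define $f(v)=\sum_{e\in I(v)} f(e)$, where $I(v)$ is the set of edges incident to $v$. For an integer $c$, $e_f(c)$ denotes the number of edges with label $c$, and $v_f(c)$ the number of vertices $v$ with $f(v)=c$. *)

From mathcomp Require Import all_boot all_order all_algebra.
Set Implicit Arguments. Unset Strict Implicit. Unset Printing Implicit Defensive.
Import GRing.Theory Num.Theory.

Definition simple_graph (T : finType) (e : rel T) : Prop :=
  symmetric e /\ irreflexive e.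

Definition connected_graph (T : finType) (e : rel T) : Prop :=
  forall x y : T, connect e x y.

Definition acyclic_graph (T : finType) (e : rel T) : Prop :=
  forall c : seq T, uniq c -> 3 <= size c -> ~~ cycle e c.

Definition is_tree (T : finType) (e : rel T) : Prop :=
  [/\ simple_graph e, 0 < #|T|, connected_graph e & acyclic_graph e].

Definition edges (T : finType) (e : rel T) : {set {set T}} :=
  [set [set x; y] | x in T, y in T & e x y].

(* f(v) = sum of the labels of the edges incident to v *)
Definition vlabel (T : finType) (e : rel T) (f : {set T} -> int) (v : T) : int :=
  (\sum_(a in edges e | v \in a) f a)%R.

Definition e_f (T : finType) (e : rel T) (f : {set T} -> int) (c : int) : nat :=
  #|[set a in edges e | f a == c]|.

Definition v_f (T : finType) (e : rel T) (f : {set T} -> int) (c : int) : nat :=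
  #|[set v : T | vlabel e f v == c]|.

From mathcomp Require Import all_boot all_order all_algebra zify.
Import GRing.Theory Num.Theory.
Set Implicit Arguments. Unset Strict Implicit. Unset Printing Implicit Defensive.

(* Root the tree at r and identify each edge with its endpoint farther from
   r, so that a labelling is a sign g v for every v != r. Every edge is counted
   at both its endpoints, hence if |f(v)| <= 1 for all v then
   v_f(1) - v_f(-1) = 2 (e_f(1) - e_f(-1)), and it suffices to reach
   |f(v)| <= 1 with edge sum +-1 (the number of edges is odd).
   This is done for every parent-closed vertex set V of even size, by
   induction on |V|. Let p be a deepest vertex with children in V; they are
   leaves. If p has two of them, label their edges 1 and -1 and recurse on the
   rest. If p has a single child x and p != r, recurse on V - {x, p} and label
   the edges xp and p (par p) by -a and a: x gets -a, p gets 0, and only the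
   label of par p moves, by a, where a = -1 if that label is 1 and a = 1
   otherwise. If p = r has a single child, V is a single edge. *)

Lemma norm_le1_add_sign (z : int) :
  (`|z| <= 1 -> `|z + (if z == 1 then -1 else 1)| <= 1)%R.
Proof. by case: eqP => [->|]; lia. Qed.

Lemma sum_norm_le1 (I : finType) (A : {pred I}) (F : I -> int) :
  {in A, forall i, `|F i| <= 1}%R ->
  (\sum_(i in A) F i = #|[set i in A | F i == 1]|%:Z - #|[set i in A | F i == -1]|%:Z)%R.
Proof.
move=> F_le1; rewrite -!sum1_card -!natz !natr_sum big_mkcond [in RHS]big_mkcond.
rewrite [X in (_ - X)%R]big_mkcond -sumrB; apply: eq_bigr => i _; rewrite !inE.
case: (boolP (i \in A)) => //= /F_le1.
by case: eqP => [->|n1] //; case: eqP => [->|n2] //; lia.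
Qed.

Lemma setD1AC (T : finType) (A : {set T}) x y : A :\ x :\ y = A :\ y :\ x.
Proof. by rewrite !setDDl setUC. Qed.

Lemma setTD1 (T : finType) (x : T) : [set: T] :\ x = [set~ x].
Proof. by apply/setP => v; rewrite !inE andbT. Qed.

Section RootedLabelings.
Variables (T : finType) (r : T) (par : T -> T) (h : T -> nat).
Hypothesis h_root : h r = 0.
Hypothesis h_par : forall v, v != r -> h (par v) < h v.

Lemma par_neq v : v != r -> par v != v.
Proof. by move=> /h_par; apply: contraTneq => ->; rewrite ltnn. Qed.

Lemma h_eq0 v : (h v == 0) = (v == r).
Proof.
apply/eqP/eqP => [hv0|->] //; apply/eqP; apply: contraT => /h_par.
by rewrite hv0.
Qed.

Definition parent_closed (V : {set T}) : Prop :=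
  r \in V /\ {in V :\ r, forall v, par v \in V}.

Lemma parent_closedD2 V x y :
  parent_closed V -> x != r -> y != r ->
  {in V :\ r, forall d, par d != x} -> {in V :\ r, forall d, par d = y -> d = x} ->
  parent_closed (V :\ x :\ y).
Proof.
move=> [rV clV] xr yr leaf_x only_x; split; first by rewrite !inE rV eq_sym yr eq_sym xr.
move=> v; rewrite !inE => /and4P [vr vy vx vV]; have vV' : v \in V :\ r by rewrite !inE vr.
by rewrite clV // leaf_x // andbT (contra_neq (only_x v vV') vx).
Qed.

Local Open Scope ring_scope.

(* [g c] labels the edge {c, par c}, so [node_label V g u] is the label of
   [u] in the subtree spanned by [V]. *)
Definition node_label (V : {set T}) (g : T -> int) (u : T) : int :=
  (if u != r then g u else 0) + \sum_(c in V :\ r | par c == u) g c.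

Definition edge_sum (V : {set T}) (g : T -> int) : int := \sum_(c in V :\ r) g c.

Definition balanced_labeling (V : {set T}) (g : T -> int) : Prop :=
  [/\ forall v, g v = 1 \/ g v = -1,
      {in V, forall u, `|node_label V g u| <= 1} & `|edge_sum V g| = 1].

Lemma eq_node_label (V : {set T}) (g g' : T -> int) u :
  {in V, g =1 g'} -> u \in V -> node_label V g u = node_label V g' u.
Proof.
move=> eq_g uV; rewrite /node_label.
congr (_ + _); first by case: ifP => // _; exact: eq_g.
by apply: eq_bigr => c /andP [/setD1P [_ /eq_g]].
Qed.

Lemma eq_edge_sum (V : {set T}) (g g' : T -> int) :
  {in V, g =1 g'} -> edge_sum V g = edge_sum V g'.
Proof. by move=> eq_g; apply: eq_bigr => c /setD1P [_ /eq_g]. Qed.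

Lemma node_labelD1 V g x u : x \in V :\ r ->
  node_label V g u = node_label (V :\ x) g u + (if par x == u then g x else 0).
Proof.
move=> xV; rewrite /node_label -addrA; congr (_ + _).
by rewrite big_mkcondr (big_setD1 x) //= addrC setD1AC -big_mkcondr.
Qed.

Lemma edge_sumD1 V g x : x \in V :\ r -> edge_sum V g = g x + edge_sum (V :\ x) g.
Proof. by move=> xV; rewrite /edge_sum (big_setD1 x) // setD1AC. Qed.

Lemma node_label_leaf V g x :
  x != r -> {in V :\ r, forall d, par d != x} -> node_label V g x = g x.
Proof.
move=> xr leaf_x; rewrite /node_label xr big_pred0 ?addr0 // => d.
by apply: negbTE; apply/andP => -[/leaf_x /negP].
Qed.

Lemma sum_node_label V g : parent_closed V ->
  \sum_(u in V) node_label V g u = edge_sum V g *+ 2.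
Proof.
move=> [rV clV]; rewrite big_split mulr2n /=; congr (_ + _).
  by rewrite (big_setD1 r) //= eqxx add0r; apply: eq_bigr => u /setD1P [->].
rewrite (exchange_big_dep (mem (V :\ r))) => [|u c _ /andP []] //=.
apply: eq_bigr => c cV; rewrite (big_pred1 (par c)) // => u /=.
by rewrite cV eq_sym andb_idl // => /eqP ->; apply: clV.
Qed.

Lemma balanced_root_edge x :
  x != r -> par x = r -> balanced_labeling [set r; x] (fun=> 1).
Proof.
move=> xr pxr; have Er : [set r; x] :\ r = [set x] by rewrite setU1K // inE eq_sym.
split=> [v|u|]; [by left | | by rewrite /edge_sum Er big_set1].
rewrite /node_label Er !inE => /orP [] /eqP ->.
  rewrite eqxx (big_pred1 x) // => v /=; rewrite inE.
  by have [->|] := eqVneq v x; rewrite ?pxr ?eqxx.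
rewrite (negbTE xr) big_pred0 // => v; rewrite inE.
by have [->|] := eqVneq v x; rewrite ?andbF // pxr eq_sym (negbTE xr).
Qed.

Lemma balanced_add_leaf_pair V x y g :
  x \in V :\ r -> y \in V :\ r -> x != y -> par x = par y ->
  {in V :\ r, forall d, par d != x} -> {in V :\ r, forall d, par d != y} ->
  balanced_labeling (V :\ x :\ y) g -> exists g', balanced_labeling V g'.
Proof.
move=> xV yV xy pxy leaf_x leaf_y [g_pm g_le1 g_sum].
set g' := [eta g with x |-> 1, y |-> -1].
have g'x : g' x = 1 by rewrite /= eqxx.
have g'y : g' y = -1 by rewrite /= eqxx eq_sym (negbTE xy).
have g'E : {in V :\ x :\ y, g' =1 g}.
  by move=> v; rewrite !inE => /and3P [vy vx _] /=; rewrite (negbTE vx) (negbTE vy).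
have yV' : y \in V :\ x :\ r.
  by move: yV; rewrite !inE => /andP [-> ->]; rewrite andbT eq_sym.
exists g'; split=> [v|u uV|].
- by rewrite /=; case: eqP => _; [left | case: eqP => _; [right | exact: g_pm]].
- have [->|ux] := eqVneq u x; first by rewrite node_label_leaf ?g'x //; case/setD1P: xV.
  have [->|uy] := eqVneq u y; first by rewrite node_label_leaf ?g'y //; case/setD1P: yV.
  have uV' : u \in V :\ x :\ y by rewrite !inE ux uy.
  rewrite (node_labelD1 _ _ xV) (node_labelD1 _ _ yV') (eq_node_label g'E) //.
  by rewrite g'x g'y pxy; case: eqP => _; rewrite ?addr0 ?addrK // g_le1.
- by rewrite (edge_sumD1 _ xV) (edge_sumD1 _ yV') (eq_edge_sum g'E) g'x g'y addNKr.
Qed.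

Lemma balanced_add_pendant_path V x g :
  parent_closed V -> x \in V :\ r -> par x != r ->
  {in V :\ r, forall d, par d != x} -> {in V :\ r, forall d, par d = par x -> d = x} ->
  balanced_labeling (V :\ x :\ par x) g -> exists g', balanced_labeling V g'.
Proof.
move=> [rV clV] xV pr leaf_x only_x.
have xr : x != r by case/setD1P: xV.
set p := par x in pr only_x *; set V' := V :\ x :\ p => -[g_pm g_le1 g_sum].
have pV : p \in V :\ x :\ r by rewrite !inE pr par_neq // clV.
have wV' : par p \in V'.
  have pV1 : p \in V :\ r by rewrite !inE pr clV.
  by rewrite !inE par_neq // leaf_x // clV.
pose a : int := if node_label V' g (par p) == 1 then -1 else 1.
have a_pm : a = 1 \/ a = -1 by rewrite /a; case: ifP; [right | left].
set g' := [eta g with x |-> - a, p |-> a].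
have g'x : g' x = - a by rewrite /= eqxx.
have g'p : g' p = a by rewrite /= eqxx (negbTE (par_neq xr)).
have g'E : {in V', g' =1 g}.
  by move=> v; rewrite !inE => /and3P [vp vx _] /=; rewrite (negbTE vx) (negbTE vp).
exists g'; split=> [v|u uV|].
- rewrite /=; case: eqP => _; first by case: a_pm => ->; [right | left; rewrite opprK].
  by case: eqP => _; [exact: a_pm | exact: g_pm].
- have [->|ux] := eqVneq u x.
    by rewrite node_label_leaf // g'x normrN; case: a_pm => ->.
  rewrite (node_labelD1 _ _ xV); have [<-|pu] := eqVneq p u.
    rewrite node_label_leaf ?g'p ?g'x ?eqxx ?addrN //.
    move=> d; rewrite !inE => /and3P [dr dx dV].
    by apply: contra_neq dx => /only_x ->; rewrite ?inE ?dr.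
  have uV' : u \in V' by rewrite !inE ux eq_sym pu.
  rewrite (node_labelD1 _ _ pV) (eq_node_label g'E) // g'p addr0.
  have [<-|_] := eqVneq (par p) u; last by rewrite addr0 g_le1.
  exact: norm_le1_add_sign (g_le1 _ wV').
- by rewrite (edge_sumD1 _ xV) (edge_sumD1 _ pV) (eq_edge_sum g'E) g'x g'p addKr.
Qed.

Lemma only_child_of_root (V : {set T}) c :
  r \in V -> c \in V :\ r -> {in V :\ r, forall d, (h (par d) <= h r)%N} ->
  {in V :\ r, forall d, par d = r -> d = c} -> V = [set r; c].
Proof.
move=> rV cV low only_c; apply/setP => v; rewrite !inE.
have [->|vr] //= := eqVneq v r; apply/idP/eqP => [vV|->]; last by case/setD1P: cV.
have vV1 : v \in V :\ r by rewrite !inE vr.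
by apply: only_c => //; apply/eqP; rewrite -h_eq0 -leqn0 -h_root low.
Qed.

Lemma balanced_labeling_exists V :
  parent_closed V -> ~~ odd #|V| -> exists g, balanced_labeling V g.
Proof.
have [n] := ubnP #|V|; elim: n V => // n IH V ltVn clV evenV.
have [rV clV'] := clV.
have IH2 x y : x \in V -> y \in V :\ x -> parent_closed (V :\ x :\ y) ->
    exists g, balanced_labeling (V :\ x :\ y) g.
  move=> xV yV clVxy; have cardV : #|V| = #|V :\ x :\ y|.+2.
    by rewrite (cardsD1 x) xV (cardsD1 y (V :\ x)) yV.
  by apply: IH clVxy _; move: ltVn evenV; rewrite cardV //= negbK => /ltnW.
have [c0 c0V] : exists c0, c0 \in V :\ r.
  apply/set0Pn; apply: contraNneq evenV => Vr0.
  by rewrite (cardsD1 r) rV Vr0 cards0.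
have [c cV cmax] := @arg_maxnP T c0 (mem (V :\ r)) (h \o par) c0V.
set p := par c in cmax *.
have leaf_child x : x \in V :\ r -> par x = p -> {in V :\ r, forall d, par d != x}.
  move=> xV xp d dV; apply: contraTneq (cmax d dV) => dx.
  by rewrite /= -ltnNge dx -/p -xp h_par //; case/setD1P: xV.
have [cr cV1] := setD1P cV.
have [/exists_inP [x xV /andP [xc /eqP xp]]|only_c] :=
  boolP [exists x in V :\ r, (x != c) && (par x == p)].
  have xV' : x \in V :\ c by rewrite !inE xc; case/setD1P: xV => _ ->.
  have leaf_x := leaf_child x xV xp.
  have [|g bal] := IH2 c x cV1 xV'.
    apply: parent_closedD2 => //; [by case/setD1P: xV | exact: leaf_child |].
    by move=> d dV dx; move: (leaf_x d dV); rewrite dx eqxx.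
  by apply: balanced_add_leaf_pair bal => //; [rewrite eq_sym | exact: leaf_child].
have only_child : {in V :\ r, forall d, par d = p -> d = c}.
  move=> d dV dp; apply/eqP; apply: contraNT only_c => dc.
  by apply/exists_inP; exists d; rewrite // dc dp eqxx.
have [pr|pr] := eqVneq p r.
  rewrite pr in only_child; rewrite (only_child_of_root rV cV _ only_child).
    by exists (fun=> 1); apply: balanced_root_edge.
  by move=> d dV; rewrite -pr; exact: cmax.
have pV : p \in V :\ c by rewrite !inE clV' // andbT; exact: par_neq.
have [|g bal] := IH2 c p cV1 pV.
  by apply: parent_closedD2 => //; exact: leaf_child.
by apply: balanced_add_pendant_path bal => //; exact: leaf_child.
Qed.

End RootedLabelings.

Section RootedTree.
Variables (T : finType) (e : rel T) (r : T).
Hypothesis e_sym : symmetric e.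
Hypothesis r_connect : forall v, connect e r v.

(* Walks of length n are n-tuples, so the predicate is boolean and
   [ex_minn] can pick the least n. *)
Definition walk_from_root v n := [exists p : n.-tuple T, path e r p && (last r p == v)].

Lemma walk_from_root_exists v : exists n, walk_from_root v n.
Proof.
have /connectP [p pp pl] := r_connect v.
by exists (size p); apply/existsP; exists (in_tuple p); rewrite /= pp -pl eqxx.
Qed.

Definition depth v := ex_minn (walk_from_root_exists v).

Lemma depth_walk v : exists2 p, path e r p & last r p = v /\ size p = depth v.
Proof.
rewrite /depth; case: ex_minnP => n /existsP [p /andP [pp /eqP pl]] _.
by exists p; rewrite ?size_tuple.
Qed.

Lemma depth_min v p : path e r p -> last r p = v -> depth v <= size p.
Proof.
move=> pp pl; rewrite /depth; case: ex_minnP => n _; apply.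
by apply/existsP; exists (in_tuple p); rewrite /= pp pl eqxx.
Qed.

Lemma depth_root : depth r = 0.
Proof. by apply/eqP; rewrite -leqn0 (@depth_min r [::]). Qed.

Lemma depth_edge u v : e u v -> depth v <= (depth u).+1.
Proof.
move=> euv; have [p pp [pl <-]] := depth_walk u.
by rewrite -(size_rcons p v) depth_min ?last_rcons // rcons_path pp pl.
Qed.

Lemma lower_neighbor_exists v : v != r -> exists y, e y v && (depth y < depth v).
Proof.
have [p pp [pl ps]] := depth_walk v.
case/lastP: p pp pl ps => [|q y] pp pl ps; first by rewrite -pl eqxx.
rewrite last_rcons in pl; subst y => _.
exists (last r q); move: pp; rewrite rcons_path => /andP [pq ->] /=.
by rewrite -ps size_rcons ltnS depth_min.
Qed.

Definition parent v := if [pick y | e y v && (depth y < depth v)] is Some y then y else r.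

Lemma parentP v : v != r -> e (parent v) v /\ depth (parent v) < depth v.
Proof.
move=> vr; rewrite /parent; case: pickP => [y /andP [] //|none].
by have [y] := lower_neighbor_exists vr; rewrite none.
Qed.

Lemma depth_parent_lt v : v != r -> depth (parent v) < depth v.
Proof. by case/parentP. Qed.

Lemma depth_parent v : v != r -> (depth (parent v)).+1 = depth v.
Proof.
by move=> /parentP [epv lt]; apply/eqP; rewrite eqn_leq lt depth_edge.
Qed.

Lemma depth_eq0 v : (depth v == 0) = (v == r).
Proof. exact: h_eq0 depth_root depth_parent_lt v. Qed.

Lemma path_to_root v :
  exists2 p, path e v p & last v p = r /\ all (fun y => depth y < depth v) p.
Proof.
have [n] := ubnP (depth v); elim: n v => // n IH v dv.
have [->|vr] := eqVneq v r; first by exists [::].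
have [epv lt] := parentP vr.
have [p pp [pl pa]] := IH (parent v) (leq_trans lt dv).
exists (parent v :: p); first by rewrite /= e_sym epv.
by rewrite /= lt; split=> //; apply: sub_all pa => y /ltn_trans; apply.
Qed.

Lemma path_from_root v :
  exists2 p, path e r p & last r p = v /\ all (fun y => depth y <= depth v) p.
Proof.
have [n] := ubnP (depth v); elim: n v => // n IH v dv.
have [->|vr] := eqVneq v r; first by exists [::].
have [epv lt] := parentP vr.
have [p pp [pl pa]] := IH (parent v) (leq_trans lt dv).
exists (rcons p v); first by rewrite rcons_path pp pl.
rewrite last_rcons all_rcons leqnn; split=> //.
by apply: sub_all pa => y /leq_ltn_trans /(_ lt) /ltnW.
Qed.

Hypothesis e_irr : irreflexive e.
Hypothesis e_acyclic : acyclic_graph e.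

Lemma root_neighbor_parent u : e r u -> parent u = r.
Proof.
move=> eru; have ur : u != r by apply: contraTneq eru => ->; rewrite e_irr.
apply/eqP; rewrite -depth_eq0 -leqn0 -ltnS (depth_parent ur).
by have := depth_edge eru; rewrite depth_root.
Qed.

Lemma edge_parent u v : e u v -> (v != r /\ parent v = u) \/ (u != r /\ parent u = v).
Proof.
move=> euv; have uv : u != v by apply: contraTneq euv => ->; rewrite e_irr.
have [vr|vr] := eqVneq v r.
  by right; subst v; split=> //; apply: root_neighbor_parent; rewrite e_sym.
have [ur|ur] := eqVneq u r; first by left; subst u; split=> //; exact: root_neighbor_parent.
have [pvu|pvu] := eqVneq (parent v) u; first by left.
have [puv|puv] := eqVneq (parent u) v; first by right.
(* Otherwise u, par u, ..., r, ..., par v is a walk that avoids v, and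
   shortening it closes a cycle through the edge uv. *)
exfalso; rewrite e_sym in euv; have dvu := depth_edge euv.
have [p pp [pl pa]] := path_to_root (parent u).
have [q pq [ql qa]] := path_from_root (parent v).
have pW : path e u (parent u :: p ++ q).
  by rewrite /= cat_path pp pl pq e_sym (proj1 (parentP ur)).
have vW : v \notin parent u :: p ++ q.
  rewrite inE mem_cat eq_sym (negbTE puv) /=; apply/norP; split; apply/negP.
    by move=> /(allP pa) /=; rewrite -ltnS (depth_parent ur) ltnNge dvu.
  by move=> /(allP qa) /=; rewrite leqNgt depth_parent_lt.
have : last u (parent u :: p ++ q) = parent v by rewrite /= last_cat pl ql.
case: (shortenP pW) => c pc uc sub_c lc.
have cyc : cycle e (v :: u :: c) by rewrite /= rcons_path euv pc lc (proj1 (parentP vr)).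
apply: negP cyc; apply: e_acyclic.
  by rewrite /= inE negb_or eq_sym uv (contra (@sub_c v)) // -cons_uniq.
by case: c lc {pc uc sub_c} => //= lc; rewrite lc eqxx in pvu.
Qed.

End RootedTree.

Section TreeLabeling.
Variables (T : finType) (e : rel T) (r : T).
Hypothesis e_sym : symmetric e.
Hypothesis e_irr : irreflexive e.
Hypothesis r_connect : forall v, connect e r v.
Hypothesis e_acyclic : acyclic_graph e.

Local Notation parent := (parent r_connect).
Local Notation depth := (depth r_connect).

Definition edge_of v : {set T} := [set v; parent v].

Lemma edge_of_inj : {in [set~ r] &, injective edge_of}.
Proof.
move=> u v; rewrite !in_setC1 => ur vr uv.
have : u \in edge_of v by rewrite -uv !inE eqxx.
rewrite !inE => /orP [/eqP //|/eqP upv].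
have : v \in edge_of u by rewrite uv !inE eqxx.
rewrite !inE => /orP [/eqP -> //|/eqP vpu].
have := depth_parent_lt r_connect ur; have := depth_parent_lt r_connect vr.
by rewrite -upv -vpu => /ltn_trans/[apply]; rewrite ltnn.
Qed.

Lemma edges_parent : edges e = edge_of @: [set~ r].
Proof.
apply/setP => a; apply/imset2P/imsetP => [[x y _] | [v]].
  rewrite inE => /andP [_ /(edge_parent e_sym r_connect e_irr e_acyclic)].
  case=> [[yr <-] ->|[xr <-] ->]; last by exists x; rewrite ?in_setC1.
  by exists y; rewrite ?in_setC1 // /edge_of setUC.
rewrite in_setC1 => vr ->; have [epv _] := parentP r_connect vr.
by exists (parent v) v; rewrite ?inE // /edge_of setUC.
Qed.

Local Open Scope ring_scope.

(* The sum has at most one term, by [edge_of_inj]. *)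
Definition edge_labeling (g : T -> int) (a : {set T}) : int :=
  \sum_(v in [set~ r] | edge_of v == a) g v.

Lemma edge_labeling_edge_of g v : v != r -> edge_labeling g (edge_of v) = g v.
Proof.
move=> vr; rewrite /edge_labeling (big_pred1 v) // => u /=.
apply/andP/eqP => [[uS /eqP uv] | ->]; last by rewrite in_setC1 vr.
by apply: (edge_of_inj uS _ uv); rewrite in_setC1.
Qed.

Lemma vlabel_edge_labeling g u :
  vlabel e (edge_labeling g) u = node_label r parent [set: T] g u.
Proof.
rewrite /vlabel edges_parent big_mkcondr big_imset /=; last exact: edge_of_inj.
rewrite (eq_bigr (fun v => if u \in edge_of v then g v else 0)) => [|v vS]; last first.
  by rewrite edge_labeling_edge_of -?in_setC1.
rewrite -big_mkcondr /node_label setTD1 (bigID (pred1 u)) /=; congr (_ + _).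
  have [->|ur] := eqVneq u r.
    rewrite big_pred0 // => v; rewrite in_setC1.
    by have [->|] := eqVneq v r; rewrite ?andbF.
  rewrite (big_pred1 u) // => v; rewrite in_setC1 !inE.
  by have [->|] := eqVneq v u; rewrite ?andbF ?ur ?eqxx.
apply: eq_bigl => v; rewrite in_setC1 !inE; have [vr|vr] //= := eqVneq v r.
have [<-|_] := eqVneq v u; last by rewrite /= andbT eq_sym.
by rewrite /= (negbTE (par_neq (depth_parent_lt r_connect) vr)).
Qed.

Lemma e_f_edge_labeling g c :
  e_f e (edge_labeling g) c = #|[set v in [set~ r] | g v == c]|.
Proof.
rewrite /e_f edges_parent -(card_in_imset (f := edge_of)); last first.
  by move=> u v /setIdP [uS _] /setIdP [vS _]; apply: edge_of_inj.
apply: eq_card => a; rewrite inE; apply/andP/imsetP.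
  case=> /imsetP [v vS ->]; rewrite edge_labeling_edge_of -?in_setC1 // => gc.
  by exists v; rewrite // inE vS.
case=> v /setIdP [vS gc] ->; split; first exact: imset_f.
by rewrite edge_labeling_edge_of -?in_setC1.
Qed.

End TreeLabeling.

Theorem proposition1 (T : finType) (e : rel T) :
  is_tree e -> ~~ odd #|T| ->
  exists f : {set T} -> int,
    [/\ (forall a, a \in edges e -> f a = 1%R \/ f a = (-1)%R),
        `|(e_f e f (-1)%R)%:Z - (e_f e f 1%R)%:Z|%R = 1%R,
        (forall v : T, (`|vlabel e f v| <= 1)%R)
      & `|(v_f e f (-1)%R)%:Z - (v_f e f 1%R)%:Z|%R = 2%R].
Proof.
case=> [[e_sym e_irr] /card_gt0P [r _] connected e_acyclic] evenT.
have r_connect := connected r; set par := parent r_connect.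
have closedT : parent_closed r par [set: T] by split=> // v; rewrite !inE.
rewrite -cardsT in evenT.
have [g [g_pm g_le1 g_sum]] :=
  balanced_labeling_exists (depth_root r_connect) (depth_parent_lt r_connect) closedT evenT.
have vlabelE := vlabel_edge_labeling e_sym e_irr r_connect e_acyclic g.
have v_fE c : v_f e (edge_labeling r_connect g) c =
    #|[set v in [set: T] | node_label r par [set: T] g v == c]|.
  by apply: eq_card => v; rewrite !inE vlabelE.
exists (edge_labeling r_connect g); split.
- move=> a; rewrite (edges_parent e_sym e_irr r_connect e_acyclic) => /imsetP [v vr ->].
  by rewrite edge_labeling_edge_of -?in_setC1.
- rewrite !(e_f_edge_labeling e_sym e_irr r_connect e_acyclic) distrC -sum_norm_le1.
    by rewrite -setTD1.
  by move=> v _; case: (g_pm v) => ->.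
- by move=> v; rewrite vlabelE g_le1 ?inE.
- rewrite !v_fE distrC -sum_norm_le1 ?sum_node_label //.
  by rewrite normrMn g_sum.
Qed.
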